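(* Let $d,n\in\mathbb{N}$, $W\in M_n(\mathbb{Z}_d)$, $\Omega=W-W^T$, $R$ a commutative ring, $\omega\in R$ such that $m\mapsto\omega^m$ is an embedding $\zeta:\mathbb{Z}_d\to R^\times$, $A\le R^\times$ a subgroup with $\omega\in A$, $M$ an associative $R$-algebra, and $\tau:\mathbb{Z}_d^n\to M$ such that $\mu:\mathcal{G}_d^n(A,\zeta,W)\to M$, $\mu(a,p,x)=a\,\omega^p\tau(x)$, is an injective multiplicative homomorphism. Then for all $(a,p,x),(b,q,y)\in\mathcal{G}_d^n(A,\zeta,W)$, $$\mu(a,p,x)\mu(b,q,y)\mu(a,p,x)^{-1}\mu(b,q,y)^{-1}=\omega^{x^T\Omega y},$$ and $$\mu(a,p,x)\mu(b,q,y)-\mu(b,q,y)\mu(a,p,x)=\big(1-\omega^{-x^T\Omega y}\big)\mu(a,p,x)\mu(b,q,y).$$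
   Context: $R^\times$ is the group of units of $R$. Let $F\subseteq A$ be a fixed set of representatives of $A/\zeta(\mathbb{Z}_d)$ with $1\in F$, and $r:A\to F$, $u:A\to\mathbb{Z}_d$ the maps with $a=r(a)\omega^{u(a)}$. The polar commutator group $\mathcal{G}_d^n(A,\zeta,W)$ is the set $F\times\mathbb{Z}_d\times\mathbb{Z}_d^n$ with multiplication $(a,p,x)\cdot(b,q,y)=(r(ab),\,u(ab)+p+q+x^TWy,\,x+y)$. *)

From HB Require Import structures.
From mathcomp Require Import all_boot all_order all_algebra.
Set Implicit Arguments. Unset Strict Implicit. Unset Printing Implicit Defensive.
Import GRing.Theory.
Local Open Scope ring_scope.

(* Elements of the polar commutator group G_d^n(A, zeta, W) are triples
   (a, p, x) with a \in F, p : 'Z_d, x : 'cV['Z_d]_n. *)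
Definition pcg_elt (R : Type) (d n : nat) := (R * 'Z_d * 'cV['Z_d]_n)%type.

Definition bilin (d n : nat) (x : 'cV['Z_d]_n) (W : 'M['Z_d]_n) (y : 'cV['Z_d]_n)
  : 'Z_d := (x^T *m W *m y) ord0 ord0.

Definition pcg_mul (R : pzRingType) (d n : nat) (r : R -> R) (u : R -> 'Z_d)
  (W : 'M['Z_d]_n) (g h : pcg_elt R d n) : pcg_elt R d n :=
  let: (a, p, x) := g in let: (b, q, y) := h in
  (r (a * b), u (a * b) + p + q + bilin x W y, x + y).

Definition pcg_mu (R : comPzRingType) (M : lalgType R) (d n : nat) (omega : R)
  (tau : 'cV['Z_d]_n -> M) (g : pcg_elt R d n) : M :=
  let: (a, p, x) := g in (a * omega ^+ p) *: tau x.

From HB Require Import structures.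
From mathcomp Require Import all_boot all_order all_algebra.
From mathcomp Require Import ring.
Set Implicit Arguments. Unset Strict Implicit. Unset Printing Implicit Defensive.
Import GRing.Theory.
Local Open Scope ring_scope.

(* Multiplying (a,p,x).(b,q,y) and (b,q,y).(a,p,x) in G gives triples that
   differ only in their Z_d component, by x^T W y - y^T W x = x^T Omega y; as
   mu turns that component into a scalar omega-power, mu(g) mu(h) equals
   omega^(x^T Omega y) mu(h) mu(g).  Every mu(g) is invertible, being the
   image of an element with a two-sided inverse in G, so both identities are
   rearrangements of this commutation rule. *)

Lemma bilin_skew (d n : nat) (x y : 'cV['Z_d]_n) (W : 'M['Z_d]_n) :
  bilin x (W - W^T) y = bilin x W y - bilin y W x.
Proof.
have trW : x^T *m W^T *m y = (y^T *m W *m x)^T by rewrite !trmx_mul trmxK mulmxA.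
by rewrite /bilin mulmxBr mulmxBl trW !mxE.
Qed.

Lemma bilinNl (d n : nat) (x y : 'cV['Z_d]_n) (W : 'M['Z_d]_n) :
  bilin (- x) W y = - bilin x W y.
Proof. by rewrite /bilin linearN /= !mulNmx !mxE. Qed.

Lemma bilinNr (d n : nat) (x y : 'cV['Z_d]_n) (W : 'M['Z_d]_n) :
  bilin x W (- y) = - bilin x W y.
Proof. by rewrite /bilin mulmxN !mxE. Qed.

Lemma expr_ZpD (R : pzSemiRingType) (d : nat) (w : R) (i j : 'Z_d) :
  (1 < d)%N -> w ^+ d = 1 -> w ^+ (i + j)%R = w ^+ i * w ^+ j.
Proof.
move=> d_gt1 wd1; have wd1' : w ^+ (Zp_trunc d).+2 = 1 by rewrite (Zp_cast d_gt1).
rewrite -exprD /= [in RHS](divn_eq (i + j) (Zp_trunc d).+2).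
by rewrite exprD mulnC exprM wd1' expr1n mul1r.
Qed.

Lemma commutator_scaled (K : comUnitRingType) (N : unitAlgType K) (G H : N) (c : K) :
  G \is a GRing.unit -> H \is a GRing.unit ->
  G * H = c *: (H * G) -> G * H * G^-1 * H^-1 = c%:A.
Proof. by move=> uG uH ->; rewrite -!scalerAl (mulrK uG) divrr. Qed.

Lemma commr_diff_scaled (K : comPzRingType) (N : lalgType K) (G H : N) (c : K) :
  H * G = c *: (G * H) -> G * H - H * G = (1 - c) *: (G * H).
Proof. by move=> ->; rewrite scalerBl scale1r. Qed.

Section PolarCommutatorGroup.

Variables (d n : nat) (W : 'M['Z_d]_n) (R : comUnitRingType) (omega : R).
Variables (A F : pred R) (r : R -> R) (u : R -> 'Z_d).
Variables (M : unitAlgType R) (tau : 'cV['Z_d]_n -> M).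

Hypothesis d_gt1 : (1 < d)%N.
Hypothesis omega_d : omega ^+ d = 1.
Hypothesis A_unit : forall a, a \in A -> a \is a GRing.unit.
Hypothesis AM : forall a b, a \in A -> b \in A -> a * b \in A.
Hypothesis AV : forall a, a \in A -> a^-1 \in A.
Hypothesis FA : forall f, f \in F -> f \in A.
Hypothesis F1 : 1 \in F.
Hypothesis F_rep : forall f g (m k : 'Z_d), f \in F -> g \in F ->
  f * omega ^+ m = g * omega ^+ k -> f = g.
Hypothesis rF : forall a, a \in A -> r a \in F.
Hypothesis ru : forall a, a \in A -> a = r a * omega ^+ u a.

Let omegaD (i j : 'Z_d) : omega ^+ (i + j)%R = omega ^+ i * omega ^+ j :=
  expr_ZpD i j d_gt1 omega_d.

Local Notation mu := (pcg_mu omega tau).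
Local Notation mul := (pcg_mul r u W).

Hypothesis mu_mul : forall g h : pcg_elt R d n, g.1.1 \in F -> h.1.1 \in F ->
  mu (mul g h) = mu g * mu h.
Hypothesis mu1 : mu (1, 0, 0) = 1.

Lemma r_eq1 (c : R) (m : 'Z_d) : c \in A -> c * omega ^+ m = 1 -> r c = 1.
Proof.
move=> cA cm1; apply: (@F_rep _ _ (u c + m) 0 (rF cA) F1).
by rewrite expr0 mulr1 omegaD mulrA -ru.
Qed.

Lemma mu_comm (a b : R) (p q : 'Z_d) (x y : 'cV['Z_d]_n) : a \in F -> b \in F ->
  mu (a, p, x) * mu (b, q, y) = omega ^+ bilin x (W - W^T) y *: (mu (b, q, y) * mu (a, p, x)).
Proof.
move=> aF bF; rewrite -!mu_mul // /pcg_mul /pcg_mu (mulrC b a) (addrC y x) scalerA.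
congr (_ *: _); rewrite mulrCA -omegaD bilin_skew.
by congr (_ * omega ^+ nat_of_ord _); ring.
Qed.

Lemma mu_unit (a : R) (p : 'Z_d) (x : 'cV['Z_d]_n) : a \in F -> mu (a, p, x) \is a GRing.unit.
Proof.
move=> aF; have aA := FA aF; set a' := r a^-1.
have a'F : a' \in F by exact: rF (AV aA).
have aa'1 : r (a * a') = 1.
  apply: (@r_eq1 _ (u a^-1)); first by rewrite AM // FA.
  by rewrite -mulrA -ru ?AV // mulrV ?A_unit.
apply/unitrP; exists (mu (a', bilin x W x - p - u (a * a'), - x)).
by rewrite -!mu_mul // -mu1 /pcg_mul (mulrC a' a) aa'1 addNr addrN bilinNl bilinNr;
  split; congr (mu (_, _, _)); ring.
Qed.

End PolarCommutatorGroup.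

Theorem proposition24 (d n : nat) (hd : (1 < d)%N) (W : 'M['Z_d]_n)
  (R : comUnitRingType) (omega : R)
  (* zeta : Z_d -> R^x, m |-> omega^m, is a (well-defined) embedding *)
  (homega_d : omega ^+ d = 1)
  (hzeta_inj : injective (fun m : 'Z_d => omega ^+ m))
  (* A is a subgroup of R^x containing omega *)
  (A : pred R)
  (hA_unit : forall a, a \in A -> a \is a GRing.unit)
  (hA1 : 1 \in A)
  (hAM : forall a b, a \in A -> b \in A -> a * b \in A)
  (hAV : forall a, a \in A -> a^-1 \in A)
  (homegaA : omega \in A)
  (* F : set of representatives of A / zeta(Z_d) with 1 \in F *)
  (F : pred R)
  (hFA : forall f, f \in F -> f \in A)
  (hF1 : 1 \in F)
  (hFrep : forall f g (m k : 'Z_d), f \in F -> g \in F ->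
             f * omega ^+ m = g * omega ^+ k -> f = g)
  (* r, u with a = r(a) omega^(u(a)) *)
  (r : R -> R) (u : R -> 'Z_d)
  (hrF : forall a, a \in A -> r a \in F)
  (hru : forall a, a \in A -> a = r a * omega ^+ u a)
  (M : unitAlgType R) (tau : 'cV['Z_d]_n -> M)
  (* mu is an injective multiplicative homomorphism *)
  (hmu_mul : forall g h : pcg_elt R d n, g.1.1 \in F -> h.1.1 \in F ->
     pcg_mu omega tau (pcg_mul r u W g h) = pcg_mu omega tau g * pcg_mu omega tau h)
  (hmu_one : pcg_mu omega tau (1, 0, 0) = 1)
  (hmu_inj : forall g h : pcg_elt R d n, g.1.1 \in F -> h.1.1 \in F ->
     pcg_mu omega tau g = pcg_mu omega tau h -> g = h) :
  forall (a : R) (p : 'Z_d) (x : 'cV['Z_d]_n) (b : R) (q : 'Z_d) (y : 'cV['Z_d]_n),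
    a \in F -> b \in F ->
    let Omega := W - W^T in
    let mg := pcg_mu omega tau (a, p, x) in
    let mh := pcg_mu omega tau (b, q, y) in
    mg * mh * mg^-1 * mh^-1 = (omega ^+ bilin x Omega y)%:A /\
    mg * mh - mh * mg = (1 - omega ^+ (- bilin x Omega y)) *: (mg * mh).
Proof.
move=> a p x b q y aF bF Omega mg mh.
have gh := mu_comm hd homega_d hmu_mul p q x y aF bF.
have unit_mu := mu_unit hd homega_d hA_unit hAM hAV hFA hF1 hFrep hrF hru hmu_mul hmu_one.
split; first exact: commutator_scaled (unit_mu _ _ _ aF) (unit_mu _ _ _ bF) gh.
apply: commr_diff_scaled.
by rewrite [in RHS]gh scalerA -expr_ZpD // addNr expr0 scale1r.
Qed.
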